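(* Let $\Omega\subset\mathbb{R}^2$ be a bounded open convex set containing the origin, satisfying $\sup_{\theta\in S^1}\sup_{\delta>0}\delta^{-1/2}\mu(\theta,\delta)<\infty$. Let $10\le r\le R<\infty$ and $R^{1/2}\le h\le R$. Let $J$ be a closed line segment whose endpoints lie in $\mathbb{Z}^2$, let $\mathbb{J}=J\cap\mathbb{Z}^2$, and assume $\mathrm{card}(\mathbb{J})\ge10$ and that the ninefold dilate $9J$ (the segment concentric with and parallel to $J$ of $9$ times its length) is contained in $\mathcal{A}(r,h)$. Let $d=d(\mathbb{J})$ be the distance between consecutive lattice points on $J$ and $$\mathcal{T}(\mathbb{J})=R^{3/4}d^{1/2}h^{-1/2}r^{-1/4}.$$ Then, with an implicit constant depending only on $\Omega$, $$\sqrt{Rr}\sum_{\ell\in\mathbb{J}}\mu\big(\tfrac{\ell}{|\ell|},\tfrac1{R|\ell|}\big)\lesssim\begin{cases}\big(\frac{Rr}{h^2d^2}\big)^{1/4}&\text{if }\mathrm{card}(\mathbb{J})\le\mathcal{T}(\mathbb{J}),\\[2pt] \big(\frac{r\,\mathrm{card}(\mathbb{J})}{hd^2}\big)^{1/3}&\text{if }\mathrm{card}(\mathbb{J})\ge\mathcal{T}(\mathbb{J}).\end{cases}$$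
   Context: $\rho^*(\xi)=\sup\{\langle x,\xi\rangle:x\in\Omega\}$. For $\theta\in S^1$, $\delta>0$ let $\mu(\theta,\delta)=\mathrm{diam}\{x\in\partial\Omega:\langle x,\theta\rangle=\rho^*(\theta)-\delta\}$ (diameter of the empty set is $0$). The annulus is $\mathcal{A}(r,h)=\{x\in\mathbb{R}^2:r\le\rho^*(x)\le r+h^{-1}\}$. *)

From Stdlib Require Import Reals Lra ZArith List.
From Coquelicot Require Import Coquelicot.
Open Scope R_scope.

Definition pt := (R * R)%type.
Definition dot (x y : pt) : R := fst x * fst y + snd x * snd y.
Definition nrm (x : pt) : R := sqrt (dot x x).
Definition psub (x y : pt) : pt := (fst x - fst y, snd x - snd y).
Definition padd (x y : pt) : pt := (fst x + fst y, snd x + snd y).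
Definition pscal (c : R) (x : pt) : pt := (c * fst x, c * snd x).
Definition pdist (x y : pt) : R := nrm (psub x y).

Definition ptZ (z : Z * Z) : pt := (IZR (fst z), IZR (snd z)).

Definition is_open (O : pt -> Prop) : Prop :=
  forall x, O x -> exists e, 0 < e /\ forall y, pdist y x < e -> O y.
Definition is_convex (O : pt -> Prop) : Prop :=
  forall x y t, O x -> O y -> 0 <= t <= 1 -> O (padd (pscal (1 - t) x) (pscal t y)).
Definition is_bounded (O : pt -> Prop) : Prop :=
  exists M, forall x, O x -> nrm x <= M.

Definition closure (O : pt -> Prop) (x : pt) : Prop :=
  forall e, 0 < e -> exists y, O y /\ pdist y x < e.
Definition interior (O : pt -> Prop) (x : pt) : Prop :=
  exists e, 0 < e /\ forall y, pdist y x < e -> O y.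
Definition boundary (O : pt -> Prop) (x : pt) : Prop :=
  closure O x /\ ~ interior O x.

(* Real supremum of a set of reals (used only on nonempty bounded sets;
   Lub_Rbar of the empty set is m_infty, whose real part is 0). *)
Definition sup_R (E : R -> Prop) : R := real (Lub_Rbar E).

Definition rho_star (O : pt -> Prop) (xi : pt) : R :=
  sup_R (fun v => exists x, O x /\ v = dot x xi).

(* diameter, with diam of the empty set equal to 0 *)
Definition diam (S : pt -> Prop) : R :=
  sup_R (fun v => exists x y, S x /\ S y /\ v = pdist x y).

Definition mu (O : pt -> Prop) (theta : pt) (delta : R) : R :=
  diam (fun x => boundary O x /\ dot x theta = rho_star O theta - delta).

Definition annulus (O : pt -> Prop) (r h : R) (x : pt) : Prop :=
  r <= rho_star O x <= r + / h.

Definition segment (a b : pt) (x : pt) : Prop :=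
  exists t, 0 <= t <= 1 /\ x = padd a (pscal t (psub b a)).

Definition dilate9 (a b : pt) (x : pt) : Prop :=
  exists s, -9/2 <= s <= 9/2 /\
    x = padd (pscal (1/2) (padd a b)) (pscal s (psub b a)).

Definition consecutive (a b : pt) (p q : Z * Z) : Prop :=
  segment a b (ptZ p) /\ segment a b (ptZ q) /\ p <> q /\
  forall z : Z * Z, segment a b (ptZ z) -> z <> p -> z <> q ->
    ~ (exists t, 0 < t < 1 /\ ptZ z = padd (ptZ p) (pscal t (psub (ptZ q) (ptZ p)))).

Definition sum_list (f : Z * Z -> R) (L : list (Z * Z)) : R :=
  fold_right (fun z acc => f z + acc) 0 L.

From Stdlib Require Import Reals Lra Lia ZArith List Permutation.
From Coquelicot Require Import Coquelicot.
Open Scope R_scope.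

(* Write the lattice points of [J] as [l_k = A + k E] ([0 <= k <= K], [|E| = d]) and
   put [P t = rho^*(A + t E)]: a convex function of [t] with values in [[r, r + 1/h]]
   on [[-4K, 5K]], because [9J] lies in the annulus.  Two points of the slice
   [{x in boundary : <x, l_k> = rho^*(l_k) - 1/R}] differ by a vector orthogonal to
   [l_k]; testing them against [l_k +- j E] bounds its length by
   [(P (k + j) + P (k - j) - 2 P k + 2/R) |l_k| / (j |det (l_k, E)|)], and the
   thinness of the annulus forces [|det (l_k, E)| >~ d |l_k|].  By convexity the
   second differences of [P] with step [j] sum to [O (j^2 / (K h))], so choosing
   [j ~ K sqrt (h / R)] gives [sqrt (R r) sum mu <~ sqrt (r / h) / d + sqrt (R r) / (h d N)].
   The hypothesis on [mu] gives the trivial bound [<~ N]; the minimum of the two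
   bounds is the two-regime estimate. *)

Lemma sup_R_upper (E : R -> Prop) (B v : R) :
  (forall w, E w -> w <= B) -> E v -> v <= sup_R E.
Proof.
  intros HB Hv. unfold sup_R.
  destruct (Lub_Rbar_correct E) as [Hub Hlub].
  assert (H1 := Hub v Hv).
  assert (H2 : Rbar_le (Lub_Rbar E) B) by (apply Hlub; intros w Hw; apply HB; auto).
  destruct (Lub_Rbar E); simpl in *; tauto.
Qed.

Lemma sup_R_least (E : R -> Prop) (c : R) :
  (exists v, E v) -> (forall w, E w -> w <= c) -> sup_R E <= c.
Proof.
  intros [v Hv] HB. unfold sup_R.
  destruct (Lub_Rbar_correct E) as [Hub Hlub].
  assert (H1 := Hub v Hv).
  assert (H2 : Rbar_le (Lub_Rbar E) c) by (apply Hlub; intros w Hw; apply HB; auto).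
  destruct (Lub_Rbar E); simpl in *; tauto.
Qed.

(* No nonemptiness is needed here: [sup_R] of the empty set is [0]. *)
Lemma sup_R_le_nonneg (E : R -> Prop) (c : R) :
  0 <= c -> (forall w, E w -> w <= c) -> sup_R E <= c.
Proof.
  intros Hc HB. unfold sup_R.
  destruct (Lub_Rbar_correct E) as [_ Hlub].
  assert (H : Rbar_le (Lub_Rbar E) c) by (apply Hlub; intros w Hw; apply HB; auto).
  destruct (Lub_Rbar E); simpl in *; tauto.
Qed.

Lemma dot_self_ge0 (x : pt) : 0 <= dot x x.
Proof. destruct x; unfold dot; simpl; nra. Qed.

Lemma nrm_ge0 (x : pt) : 0 <= nrm x.
Proof. apply sqrt_pos. Qed.

Lemma nrm_mul_self (x : pt) : nrm x * nrm x = dot x x.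
Proof. apply sqrt_def, dot_self_ge0. Qed.

Lemma dot_psubl (z y x : pt) : dot (psub z y) x = dot z x - dot y x.
Proof. destruct z, y, x; unfold dot, psub; simpl; ring. Qed.

Lemma dot_paddr (y u w : pt) : dot y (padd u w) = dot y u + dot y w.
Proof. destruct y, u, w; unfold dot, padd; simpl; ring. Qed.

Lemma dot_pscall (c : R) (y x : pt) : dot (pscal c y) x = c * dot y x.
Proof. destruct y, x; unfold dot, pscal; simpl; ring. Qed.

Lemma dot_pscalr (c : R) (y x : pt) : dot y (pscal c x) = c * dot y x.
Proof. destruct y, x; unfold dot, pscal; simpl; ring. Qed.

Lemma nrm_pscal (c : R) (x : pt) : nrm (pscal c x) = Rabs c * nrm x.
Proof.
  unfold nrm. rewrite <- sqrt_Rsqr_abs, <- sqrt_mult_alt by apply Rle_0_sqr.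
  f_equal. destruct x; unfold dot, pscal, Rsqr; simpl; ring.
Qed.

Lemma Rabs_dot_le (x y : pt) : Rabs (dot x y) <= nrm x * nrm y.
Proof.
  assert (CS : dot x y * dot x y <= dot x x * dot y y).
  { destruct x as [a b], y as [c e]; unfold dot; simpl.
    assert (0 <= (a * e - b * c) * (a * e - b * c)) by apply Rle_0_sqr. nra. }
  rewrite <- (nrm_mul_self x), <- (nrm_mul_self y) in CS.
  assert (0 <= nrm x) by apply nrm_ge0. assert (0 <= nrm y) by apply nrm_ge0.
  apply Rsqr_incr_0_var; unfold Rsqr.
  - rewrite <- Rabs_mult, Rabs_right by (apply Rle_ge; nra). nra.
  - nra.
Qed.

Lemma dot_le (x y : pt) : dot x y <= nrm x * nrm y.
Proof. eapply Rle_trans; [apply Rle_abs | apply Rabs_dot_le]. Qed.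

Definition det2 (x y : pt) : R := fst x * snd y - snd x * fst y.

Lemma dot_perp_sqr (w l e : pt) : dot w l = 0 -> 0 < dot l l ->
  dot w e * dot w e * dot l l = dot w w * (det2 l e * det2 l e).
Proof.
  destruct w as [w1 w2], l as [l1 l2], e as [e1 e2]; unfold dot, det2; simpl.
  intros H Hl. set (p := - l2 * w1 + l1 * w2).
  assert (A : (w1*e1 + w2*e2) * (l1*l1 + l2*l2)
              = (l1*e1 + l2*e2) * (w1*l1 + w2*l2) + (l1*e2 - l2*e1) * p) by (unfold p; ring).
  assert (B : (w1*w1 + w2*w2) * (l1*l1 + l2*l2) = (w1*l1 + w2*l2) * (w1*l1 + w2*l2) + p * p)
    by (unfold p; ring).
  rewrite H, Rmult_0_r, Rplus_0_l in A, B.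
  apply (Rmult_eq_reg_r (l1*l1 + l2*l2)); [|lra].
  transitivity (((w1*e1 + w2*e2) * (l1*l1 + l2*l2)) * ((w1*e1 + w2*e2) * (l1*l1 + l2*l2))); [ring|].
  rewrite A.
  transitivity (((w1*w1 + w2*w2) * (l1*l1 + l2*l2)) * ((l1*e2 - l2*e1) * (l1*e2 - l2*e1)));
    [|ring].
  rewrite B. ring.
Qed.

Lemma nrm_perp_le (w l e : pt) (B : R) : dot w l = 0 -> 0 < nrm l -> det2 l e <> 0 ->
  Rabs (dot w e) <= B -> nrm w <= B * nrm l / Rabs (det2 l e).
Proof.
  intros H Hl Hd HB.
  assert (Hll : 0 < dot l l) by (rewrite <- nrm_mul_self; nra).
  assert (E := dot_perp_sqr w l e H Hll).
  assert (Hda : 0 < Rabs (det2 l e)) by (apply Rabs_pos_lt; auto).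
  assert (Hw := nrm_ge0 w).
  apply (Rmult_le_reg_r (Rabs (det2 l e))); [auto|].
  unfold Rdiv; rewrite Rmult_assoc, Rinv_l, Rmult_1_r by lra.
  assert (Heq : nrm w * Rabs (det2 l e) = Rabs (dot w e) * nrm l).
  { apply Rsqr_inj.
    - apply Rmult_le_pos; auto; apply Rabs_pos.
    - apply Rmult_le_pos; [apply Rabs_pos | lra].
    - unfold Rsqr.
      transitivity ((nrm w * nrm w) * (Rabs (det2 l e) * Rabs (det2 l e))); [ring|].
      transitivity ((Rabs (dot w e) * Rabs (dot w e)) * (nrm l * nrm l)); [|ring].
      rewrite <- !Rabs_mult, !Rabs_right by (apply Rle_ge, Rle_0_sqr).
      rewrite !nrm_mul_self. lra. }
  rewrite Heq. apply Rmult_le_compat_r; lra.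
Qed.

Lemma dot_sqr_add_det2_sqr (f l : pt) :
  dot f l * dot f l + det2 l f * det2 l f = dot f f * dot l l.
Proof. destruct f, l; unfold dot, det2; simpl; ring. Qed.

Lemma orthogonal_split (l f : pt) (s : R) : 0 < nrm l -> 0 <= s ->
  let c := s * dot f l / (nrm l * nrm l) in
  let w := psub (pscal s f) (pscal c l) in
  padd (pscal (1 + c) l) w = padd l (pscal s f) /\ nrm w * nrm l = s * Rabs (det2 l f).
Proof.
  intros Hl Hs c w. split.
  - unfold w, padd, psub, pscal. destruct l, f; simpl. f_equal; ring.
  - assert (Hnn : nrm l * nrm l = dot l l) by apply nrm_mul_self.
    assert (Hw2 : dot w w * (nrm l * nrm l) = s * s * (det2 l f * det2 l f)).
    { unfold w, c. rewrite Hnn. unfold dot, det2, psub, pscal in *.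
      destruct l as [l1 l2], f as [f1 f2]; simpl in *.
      field. intro Z. rewrite Z in Hnn. nra. }
    apply Rsqr_inj; [apply Rmult_le_pos; [apply nrm_ge0 | lra]
                    | apply Rmult_le_pos; [lra | apply Rabs_pos] |].
    unfold Rsqr. transitivity ((nrm w * nrm w) * (nrm l * nrm l)); [ring|].
    rewrite nrm_mul_self, Hw2. transitivity (s * s * (Rabs (det2 l f) * Rabs (det2 l f))); [|ring].
    rewrite <- Rabs_mult, Rabs_right by (apply Rle_ge, Rle_0_sqr). ring.
Qed.

Definition bounded_by (O : pt -> Prop) (M : R) : Prop := forall y, O y -> nrm y <= M.

Definition line_pt (A E : pt) (t : R) : pt := padd A (pscal t E).

Lemma dot_line_pt (y A E : pt) (t : R) : dot y (line_pt A E t) = dot y A + t * dot y E.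
Proof. unfold line_pt; rewrite dot_paddr, dot_pscalr; ring. Qed.

Section SupportFunction.

Variables (O : pt -> Prop) (M : R).
Hypothesis HM : bounded_by O M.
Hypothesis H0 : O (0, 0).

Lemma rho_star_ge (x y : pt) : O y -> dot y x <= rho_star O x.
Proof.
  intros Hy. apply (sup_R_upper _ (M * nrm x)).
  - intros w [z [Hz ->]]. eapply Rle_trans; [apply dot_le|].
    apply Rmult_le_compat_r; [apply nrm_ge0 | auto].
  - exists y; auto.
Qed.

Lemma rho_star_le (x : pt) (c : R) : (forall y, O y -> dot y x <= c) -> rho_star O x <= c.
Proof.
  intros H. apply sup_R_least.
  - exists (dot (0, 0) x); exists (0, 0); auto.
  - intros w [z [Hz ->]]; auto.
Qed.

Lemma rho_star_ge_closure (x y : pt) : closure O y -> dot y x <= rho_star O x.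
Proof.
  intros Hy. destruct (Rle_or_lt (dot y x) (rho_star O x)) as [H|H]; auto.
  set (g := dot y x - rho_star O x).
  assert (Hn := nrm_ge0 x).
  destruct (Hy (g / (nrm x + 1))) as [z [Hz Hd]].
  { apply Rdiv_lt_0_compat; unfold g; lra. }
  assert (H1 := rho_star_ge x z Hz).
  assert (H2 := Rabs_dot_le (psub z y) x).
  rewrite dot_psubl in H2. unfold pdist in Hd.
  assert (H3 : nrm (psub z y) * nrm x < g).
  { apply Rle_lt_trans with (g / (nrm x + 1) * nrm x).
    - apply Rmult_le_compat_r; lra.
    - apply (Rmult_lt_reg_r (nrm x + 1)); [lra|].
      unfold g in *. field_simplify; nra. }
  apply Rabs_le_between' in H2. unfold g in *. lra.
Qed.

Lemma rho_star_pscal (x : pt) (c : R) : 0 < c -> rho_star O (pscal c x) = c * rho_star O x.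
Proof.
  intros Hc. apply Rle_antisym.
  - apply rho_star_le. intros y Hy. rewrite dot_pscalr.
    apply Rmult_le_compat_l; [lra | apply rho_star_ge; auto].
  - enough (rho_star O x <= rho_star O (pscal c x) / c).
    { apply (Rmult_le_compat_l c) in H; [|lra]. unfold Rdiv in H.
      rewrite (Rmult_comm (rho_star _ _)), <- Rmult_assoc, Rinv_r, Rmult_1_l in H by lra. lra. }
    apply rho_star_le. intros y Hy.
    assert (H := rho_star_ge (pscal c x) y Hy). rewrite dot_pscalr in H.
    apply (Rmult_le_reg_l c); [lra|]. field_simplify; lra.
Qed.

Lemma rho_star_le_nrm (x : pt) : rho_star O x <= M * nrm x.
Proof.
  apply rho_star_le. intros y Hy.
  eapply Rle_trans; [apply dot_le|]. apply Rmult_le_compat_r; [apply nrm_ge0 | auto].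
Qed.

Lemma rho_star_ge_nrm (e0 : R) (x : pt) : 0 < e0 ->
  (forall y, pdist y (0, 0) < e0 -> O y) -> e0 / 2 * nrm x <= rho_star O x.
Proof.
  intros He Hball.
  destruct (Req_dec (nrm x) 0) as [E|E].
  - rewrite E, Rmult_0_r. replace 0 with (dot (0, 0) x) by (destruct x; unfold dot; simpl; ring).
    apply rho_star_ge; auto.
  - assert (Hp : 0 < nrm x) by (assert (H := nrm_ge0 x); lra).
    set (y := pscal (e0 / (2 * nrm x)) x).
    assert (Hy : O y).
    { apply Hball. unfold pdist. replace (psub y (0, 0)) with y
        by (unfold y, psub, pscal; destruct x; simpl; f_equal; ring).
      unfold y. rewrite nrm_pscal, Rabs_right by (apply Rle_ge, Rlt_le, Rdiv_lt_0_compat; lra).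
      field_simplify; lra. }
    assert (H := rho_star_ge x y Hy). unfold y in H.
    rewrite dot_pscall, <- nrm_mul_self in H.
    replace (e0 / (2 * nrm x) * (nrm x * nrm x)) with (e0 / 2 * nrm x) in H by (field; lra).
    exact H.
Qed.

Lemma rho_star_padd_ge (u w : pt) : rho_star O u <= rho_star O (padd u w) + M * nrm w.
Proof.
  apply rho_star_le. intros y Hy.
  assert (H1 := rho_star_ge (padd u w) y Hy). rewrite dot_paddr in H1.
  assert (H2 := Rabs_dot_le y w). assert (H3 := Rle_abs (- dot y w)). rewrite Rabs_Ropp in H3.
  assert (nrm y * nrm w <= M * nrm w) by (apply Rmult_le_compat_r; [apply nrm_ge0 | auto]).
  lra.
Qed.

Lemma rho_star_line_convex (A E : pt) (t s : R) :
  2 * rho_star O (line_pt A E t)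
    <= rho_star O (line_pt A E (t - s)) + rho_star O (line_pt A E (t + s)).
Proof.
  enough (rho_star O (line_pt A E t)
          <= (rho_star O (line_pt A E (t - s)) + rho_star O (line_pt A E (t + s))) / 2) by lra.
  apply rho_star_le. intros y Hy.
  assert (H1 := rho_star_ge (line_pt A E (t - s)) y Hy).
  assert (H2 := rho_star_ge (line_pt A E (t + s)) y Hy).
  rewrite !dot_line_pt in *. lra.
Qed.

Lemma slice_dot_eq (l y : pt) (R0 : R) : 0 < R0 -> 0 < nrm l ->
  dot y (pscal (/ nrm l) l) = rho_star O (pscal (/ nrm l) l) - / (R0 * nrm l) ->
  dot y l = rho_star O l - / R0.
Proof.
  intros HR Hl E.
  rewrite dot_pscalr, rho_star_pscal in E by (apply Rinv_0_lt_compat; auto).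
  apply (Rmult_eq_compat_l (nrm l)) in E.
  rewrite Rmult_minus_distr_l, <- !Rmult_assoc, Rinv_r, !Rmult_1_l in E by lra.
  rewrite E. field. lra.
Qed.

(* Two points of the slice differ by a vector orthogonal to [l]; testing them
   against [l +- j E] bounds the component of that vector along [E] by the
   second difference of [rho_star] along the line. *)
Lemma mu_le_second_difference (A E : pt) (k j R0 : R) :
  let l := line_pt A E k in
  0 < R0 -> 0 < j -> 0 < nrm l -> det2 l E <> 0 ->
  mu O (pscal (/ nrm l) l) (/ (R0 * nrm l)) <=
    (rho_star O (line_pt A E (k + j)) + rho_star O (line_pt A E (k - j))
      - 2 * rho_star O l + 2 / R0) / j * nrm l / Rabs (det2 l E).
Proof.
  intros l HR Hj Hl Hd.
  set (Q := rho_star O (line_pt A E (k + j)) + rho_star O (line_pt A E (k - j))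
            - 2 * rho_star O l + 2 / R0).
  assert (HQ : 0 <= Q).
  { assert (H := rho_star_line_convex A E k j).
    assert (0 < 2 / R0) by (apply Rdiv_lt_0_compat; lra). unfold Q, l. lra. }
  apply sup_R_le_nonneg.
  { apply Rmult_le_pos; [apply Rmult_le_pos; [apply Rdiv_le_0_compat|]|]; try lra.
    apply Rlt_le, Rinv_0_lt_compat, Rabs_pos_lt; auto. }
  intros v [y1 [y2 [[[C1 _] E1] [[[C2 _] E2] ->]]]].
  apply slice_dot_eq in E1, E2; auto.
  assert (A1 := rho_star_ge_closure (line_pt A E (k + j)) y1 C1).
  assert (A2 := rho_star_ge_closure (line_pt A E (k - j)) y2 C2).
  assert (A3 := rho_star_ge_closure (line_pt A E (k + j)) y2 C2).
  assert (A4 := rho_star_ge_closure (line_pt A E (k - j)) y1 C1).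
  unfold pdist. apply nrm_perp_le; auto.
  - rewrite dot_psubl, E1, E2. ring.
  - unfold l in E1, E2. rewrite dot_line_pt in E1, E2, A1, A2, A3, A4.
    rewrite dot_psubl. apply Rabs_le.
    assert (HQj : Q / j * j = Q) by (field; lra).
    split; apply (Rmult_le_reg_r j); auto; rewrite ?Ropp_mult_distr_l_reverse, HQj;
      unfold Q, l in *; lra.
Qed.

(* If [l + s f] stays in the thin annulus while [f] has a sizeable component
   along [l], then [rho_star] grows too much along [f]; hence [f] makes an
   angle bounded below with [l]. *)
Lemma det2_lower_bound_dir (l f : pt) (s h eps : R) :
  0 < M -> 0 < eps -> 0 < s -> 0 < nrm l -> 0 < h ->
  eps * nrm l <= rho_star O l ->
  rho_star O (padd l (pscal s f)) <= rho_star O l + / h ->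
  0 <= dot f l -> / (h * s) <= eps * nrm f / 8 ->
  Rmin (1 / 2) (eps / (8 * M)) * nrm f * nrm l <= Rabs (det2 l f).
Proof.
  intros HMp He Hs Hn Hh Hlow Hstep HA Hhs.
  destruct (orthogonal_split l f s) as [Hdecomp Hw]; [auto | lra |].
  set (c := s * dot f l / (nrm l * nrm l)) in *.
  set (w := psub (pscal s f) (pscal c l)) in *.
  set (n := nrm l) in *. set (a := dot f l) in *. set (D := det2 l f) in *.
  set (d := nrm f) in *.
  assert (Hd0 : 0 <= d) by apply nrm_ge0.
  assert (Hlagrange : a * a + D * D = d * d * (n * n))
    by (unfold a, D, d, n; rewrite dot_sqr_add_det2_sqr, !nrm_mul_self; ring).
  assert (Hc : 0 <= c)
    by (unfold c; apply Rmult_le_pos; [nra | apply Rlt_le, Rinv_0_lt_compat; nra]).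
  assert (Hgrowth : c * rho_star O l <= / h + M * nrm w).
  { assert (Hp := rho_star_padd_ge (pscal (1 + c) l) w).
    rewrite Hdecomp, rho_star_pscal in Hp by lra. nra. }
  assert (Hk : s * a * eps <= n / h + M * s * Rabs D).
  { assert (c * (eps * n) <= c * rho_star O l) by (apply Rmult_le_compat_l; auto).
    apply (Rmult_le_reg_r (/ n)); [apply Rinv_0_lt_compat; lra|].
    replace (s * a * eps * / n) with (c * (eps * n)) by (unfold c; field; lra).
    replace ((n / h + M * s * Rabs D) * / n) with (/ h + M * nrm w)
      by (replace (M * s * Rabs D) with (M * (s * Rabs D)) by ring; rewrite <- Hw; field; lra).
    lra. }
  assert (Hk2 : a * eps <= n * (eps * d / 8) + M * Rabs D).
  { apply (Rmult_le_reg_l s); [lra|].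
    enough (n / h <= s * (n * (eps * d / 8))) by nra.
    replace (n / h) with (s * n * / (h * s)) by (field; lra).
    replace (s * (n * (eps * d / 8))) with (s * n * (eps * d / 8)) by ring.
    apply Rmult_le_compat_l; [nra | lra]. }
  assert (HDa : Rabs D * Rabs D = D * D)
    by (rewrite <- Rabs_mult, Rabs_right; [ring | apply Rle_ge, Rle_0_sqr]).
  assert (HD0 := Rabs_pos D).
  assert (Hmin1 : Rmin (1 / 2) (eps / (8 * M)) <= 1 / 2) by apply Rmin_l.
  assert (Hmin2 : Rmin (1 / 2) (eps / (8 * M)) <= eps / (8 * M)) by apply Rmin_r.
  assert (0 <= d * n) by nra.
  (* Either [|D| >= d n / 2], or [a >= d n / 2] and then [Hk2] forces [|D|] up. *)
  destruct (Rle_or_lt (d * n / 2) (Rabs D)) as [Hb|Hb]; [nra|].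
  assert (HA2 : d * n / 2 <= a) by nra.
  enough (eps / (8 * M) * (d * n) <= Rabs D) by nra.
  apply (Rmult_le_reg_l (8 * M)); [lra|].
  replace (8 * M * (eps / (8 * M) * (d * n))) with (eps * d * n) by (field; lra).
  nra.
Qed.

Lemma det2_lower_bound (A E : pt) (k s r h eps : R) :
  let l := line_pt A E k in
  0 < M -> 0 < eps -> 0 < s -> 0 < nrm l -> 0 < h ->
  eps * nrm l <= rho_star O l -> r <= rho_star O l ->
  rho_star O (line_pt A E (k + s)) <= r + / h -> rho_star O (line_pt A E (k - s)) <= r + / h ->
  / (h * s) <= eps * nrm E / 8 ->
  Rmin (1 / 2) (eps / (8 * M)) * nrm E * nrm l <= Rabs (det2 l E).
Proof.
  intros l HMp He Hs Hn Hh Hlow Hr Hplus Hminus Hhs.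
  destruct (Rle_or_lt 0 (dot E l)) as [HA|HA].
  - apply (det2_lower_bound_dir _ _ s h eps); auto.
    replace (padd l (pscal s E)) with (line_pt A E (k + s)) by
      (unfold l, line_pt, padd, pscal; destruct A, E; simpl; f_equal; ring).
    lra.
  - set (f := pscal (-1) E).
    assert (Hf : nrm f = nrm E) by (unfold f; rewrite nrm_pscal, Rabs_left; lra).
    assert (Hdf : det2 l f = - det2 l E) by (unfold f, det2, pscal; destruct l, E; simpl; ring).
    rewrite <- Rabs_Ropp, <- Hdf, <- Hf.
    apply (det2_lower_bound_dir _ _ s h eps); auto.
    + replace (padd l (pscal s f)) with (line_pt A E (k - s)) by
        (unfold f, l, line_pt, padd, pscal; destruct A, E; simpl; f_equal; ring).
      lra.
    + unfold f. rewrite dot_pscall. lra.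
    + rewrite Hf; auto.
Qed.

End SupportFunction.

Fixpoint sumN (n : nat) (F : nat -> R) : R :=
  match n with O => 0 | S m => sumN m F + F m end.

Lemma sumN_ext (n : nat) (F G : nat -> R) :
  (forall i, (i < n)%nat -> F i = G i) -> sumN n F = sumN n G.
Proof. induction n; simpl; intros H; auto. rewrite IHn, H; auto. Qed.

Lemma sumN_le (n : nat) (F G : nat -> R) :
  (forall i, (i < n)%nat -> F i <= G i) -> sumN n F <= sumN n G.
Proof.
  induction n; simpl; intros H; [lra|].
  assert (F n <= G n) by auto. assert (sumN n F <= sumN n G) by auto. lra.
Qed.

Lemma sumN_plus (n : nat) (F G : nat -> R) : sumN n (fun i => F i + G i) = sumN n F + sumN n G.
Proof. induction n; simpl; [ring|]. rewrite IHn; ring. Qed.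

Lemma sumN_minus (n : nat) (F G : nat -> R) : sumN n (fun i => F i - G i) = sumN n F - sumN n G.
Proof. induction n; simpl; [ring|]. rewrite IHn; ring. Qed.

Lemma sumN_const (n : nat) (c : R) : sumN n (fun _ => c) = INR n * c.
Proof. induction n; simpl sumN; [simpl; ring|]. rewrite IHn, S_INR; ring. Qed.

Lemma sumN_scal (n : nat) (c : R) (F : nat -> R) : sumN n (fun i => c * F i) = c * sumN n F.
Proof. induction n; simpl; [ring|]. rewrite IHn; ring. Qed.

Lemma sumN_split (a b : nat) (F : nat -> R) :
  sumN (a + b) F = sumN a F + sumN b (fun i => F (a + i)%nat).
Proof.
  induction b; simpl; [rewrite Nat.add_0_r; ring|].
  rewrite Nat.add_succ_r; simpl. rewrite IHb; ring.
Qed.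

Lemma sumN_ge_const (n : nat) (c : R) (F : nat -> R) :
  (forall i, (i < n)%nat -> c <= F i) -> INR n * c <= sumN n F.
Proof. intros H. rewrite <- sumN_const. apply sumN_le; auto. Qed.

Lemma sumN_le_const (n : nat) (c : R) (F : nat -> R) :
  (forall i, (i < n)%nat -> F i <= c) -> sumN n F <= INR n * c.
Proof. intros H. rewrite <- sumN_const. apply sumN_le; auto. Qed.

Lemma sumN_telescope (n c : nat) (g : nat -> R) :
  sumN n (fun i => g (c + i + 1)%nat - g (c + i)%nat) = g (c + n)%nat - g c.
Proof.
  induction n; simpl; [rewrite Nat.add_0_r; ring|].
  rewrite IHn. replace (c + n + 1)%nat with (c + S n)%nat by lia. ring.
Qed.

(* Both sides equal [sum_{i < n + j} g (c + i)] minus the first [n] resp. [j] terms. *)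
Lemma sumN_telescope_swap (n j c : nat) (g : nat -> R) :
  sumN n (fun i => g (c + i + j)%nat - g (c + i)%nat)
  = sumN j (fun i => g (c + i + n)%nat - g (c + i)%nat).
Proof.
  rewrite !sumN_minus.
  assert (E1 := sumN_split j n (fun i => g (c + i)%nat)).
  assert (E2 := sumN_split n j (fun i => g (c + i)%nat)).
  rewrite Nat.add_comm, E1 in E2.
  assert (A : sumN n (fun i => g (c + (j + i))%nat) = sumN n (fun i => g (c + i + j)%nat))
    by (apply sumN_ext; intros; f_equal; lia).
  assert (B : sumN j (fun i => g (c + (n + i))%nat) = sumN j (fun i => g (c + i + n)%nat))
    by (apply sumN_ext; intros; f_equal; lia).
  rewrite A, B in E2. lra.
Qed.

Section ConvexSequence.

Variables (g : nat -> R) (K : nat) (r eps : R).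
Hypothesis g_range : forall n, (n <= 9 * K)%nat -> r <= g n <= r + eps.
Hypothesis g_convex : forall n, (n + 2 <= 9 * K)%nat -> 2 * g (S n) <= g n + g (S (S n)).

Lemma increments_nondecreasing (m n : nat) : (n <= m)%nat -> (m + 2 <= 9 * K)%nat ->
  g (S n) - g n <= g (S m) - g m.
Proof.
  revert n. induction m; intros n Hnm Hm.
  - replace n with 0%nat by lia. lra.
  - destruct (Nat.eq_dec n (S m)) as [->|Hne]; [lra|].
    assert (H1 := IHm n ltac:(lia) ltac:(lia)).
    assert (H2 := g_convex m ltac:(lia)). lra.
Qed.

(* A convex sequence oscillating by at most [eps] has increments of size at most
   [eps / (3 K)] away from the ends, by comparison with the [3 K] increments to
   the right resp. to the left. *)
Lemma increment_bound (n : nat) : (3 * K <= n + 1)%nat -> (n + 3 * K + 1 <= 9 * K)%nat ->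
  - eps <= INR (3 * K) * (g (S n) - g n) <= eps.
Proof.
  intros Hn1 Hn2. split.
  - set (c := (n + 1 - 3 * K)%nat).
    assert (T := sumN_telescope (3 * K) c g).
    replace (c + 3 * K)%nat with (S n) in T by (unfold c; lia).
    assert (L : sumN (3 * K) (fun i => g (c + i + 1)%nat - g (c + i)%nat)
                <= INR (3 * K) * (g (S n) - g n)).
    { apply sumN_le_const. intros i Hi.
      replace (c + i + 1)%nat with (S (c + i)) by lia.
      apply increments_nondecreasing; unfold c; lia. }
    assert (B1 := g_range (S n) ltac:(lia)). assert (B2 := g_range c ltac:(unfold c; lia)). lra.
  - assert (T := sumN_telescope (3 * K) n g).
    assert (L : INR (3 * K) * (g (S n) - g n)
                <= sumN (3 * K) (fun i => g (n + i + 1)%nat - g (n + i)%nat)).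
    { apply sumN_ge_const. intros i Hi.
      replace (n + i + 1)%nat with (S (n + i)) by lia.
      apply increments_nondecreasing; lia. }
    assert (B1 := g_range (n + 3 * K)%nat ltac:(lia)). assert (B2 := g_range n ltac:(lia)). lra.
Qed.

Lemma window_bound (c0 j : nat) : (3 * K <= c0 + 1)%nat -> (c0 + j <= 6 * K)%nat ->
  - (INR j * eps) <= INR (3 * K) * (g (c0 + j)%nat - g c0) <= INR j * eps.
Proof.
  intros H1 H2.
  rewrite <- (sumN_telescope j c0 g), <- sumN_scal.
  assert (Hinc : forall i, (i < j)%nat ->
            - eps <= INR (3 * K) * (g (c0 + i + 1)%nat - g (c0 + i)%nat) <= eps).
  { intros i Hi. replace (c0 + i + 1)%nat with (S (c0 + i)) by lia.
    apply increment_bound; lia. }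
  split.
  - replace (- (INR j * eps)) with (INR j * - eps) by ring.
    apply sumN_ge_const. intros i Hi. apply Hinc; auto.
  - apply sumN_le_const. intros i Hi. apply Hinc; auto.
Qed.

(* Summed over [k], the second differences telescope into two sums of [j]-step
   increments taken [K + 1] apart, each controlled by [window_bound]. *)
Lemma second_difference_sum_le (j : nat) : (1 <= j <= K)%nat ->
  INR (3 * K) * sumN (S K) (fun k => g (4 * K + k + j)%nat + g (4 * K + k - j)%nat
                                      - 2 * g (4 * K + k)%nat)
  <= 2 * INR j * INR j * eps.
Proof.
  intros Hj.
  rewrite (sumN_ext _ _ (fun k => (g (4 * K + k + j)%nat - g (4 * K + k)%nat)
        - (g ((4 * K - j) + k + j)%nat - g ((4 * K - j) + k)%nat))).
  2: { intros i Hi. replace ((4 * K - j) + i + j)%nat with (4 * K + i)%nat by lia.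
       replace ((4 * K - j) + i)%nat with (4 * K + i - j)%nat by lia. ring. }
  rewrite sumN_minus, (sumN_telescope_swap (S K) j (4 * K)),
    (sumN_telescope_swap (S K) j (4 * K - j)), <- sumN_minus, <- sumN_scal.
  replace (2 * INR j * INR j * eps) with (INR j * (2 * INR j * eps)) by ring.
  apply sumN_le_const. intros i Hi.
  assert (A1 := window_bound (4 * K - j + i + S K)%nat j ltac:(lia) ltac:(lia)).
  assert (A2 := window_bound (4 * K - j + i)%nat j ltac:(lia) ltac:(lia)).
  replace (4 * K - j + i + S K + j)%nat with (4 * K + i + S K)%nat in A1 by lia.
  replace (4 * K - j + i + j)%nat with (4 * K + i)%nat in A2 by lia.
  lra.
Qed.

End ConvexSequence.

Lemma segment_coords (A1 A2 B1 B2 X1 X2 : R) :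
  segment (A1, A2) (B1, B2) (X1, X2) <->
  exists t, 0 <= t <= 1 /\ X1 = A1 + t * (B1 - A1) /\ X2 = A2 + t * (B2 - A2).
Proof.
  unfold segment, padd, pscal, psub; simpl. split.
  - intros [t [Ht E]]. apply pair_equal_spec in E. exists t; tauto.
  - intros [t [Ht [E1 E2]]]. exists t. split; auto. rewrite E1, E2; auto.
Qed.

Lemma ptZ_inj (z w : Z * Z) : ptZ z = ptZ w -> z = w.
Proof.
  destruct z, w; unfold ptZ; simpl. intros H. apply pair_equal_spec in H as [H1 H2].
  apply eq_IZR in H1, H2. subst; auto.
Qed.

Lemma nrm_ptZ_ge1 (z : Z * Z) : ptZ z <> (0, 0) -> 1 <= nrm (ptZ z).
Proof.
  destruct z as [z1 z2]. unfold ptZ, nrm, dot; simpl. intros H.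
  assert (Hz : (1 <= z1 * z1 + z2 * z2)%Z).
  { destruct (Z.eq_dec z1 0) as [->|H1]; destruct (Z.eq_dec z2 0) as [->|H2]; try nia.
    exfalso; apply H; auto. }
  apply IZR_le in Hz. rewrite plus_IZR, !mult_IZR in Hz.
  rewrite <- sqrt_1. apply sqrt_le_1_alt. lra.
Qed.

Lemma affine_param_shift (A B tp tq tz u n : R) : u * (tq - tp) = tz - tp ->
  (A + tz * (B - A)) - n * ((A + tq * (B - A)) - (A + tp * (B - A)))
  = (A + tp * (B - A)) + (u - n) * ((A + tq * (B - A)) - (A + tp * (B - A))).
Proof. intros H. replace tz with (tp + u * (tq - tp)) by lra. ring. Qed.

(* If a lattice point [z] of the segment were [p + (n + f)(q - p)] with
   [0 < f < 1], then [z - n (q - p)] would be a lattice point of the segment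
   strictly between the consecutive points [p] and [q]. *)
Lemma consecutive_lattice_on_line (a b p q z : Z * Z) :
  consecutive (ptZ a) (ptZ b) p q -> segment (ptZ a) (ptZ b) (ptZ z) ->
  exists n : Z, z = (fst p + n * (fst q - fst p), snd p + n * (snd q - snd p))%Z.
Proof.
  destruct a as [a1 a2], b as [b1 b2], p as [p1 p2], q as [q1 q2], z as [z1 z2].
  unfold consecutive, ptZ; simpl.
  intros [Sp [Sq [Hpq Hno]]] Sz.
  apply segment_coords in Sp as [tp [Htp [P1 P2]]].
  apply segment_coords in Sq as [tq [Htq [Q1 Q2]]].
  apply segment_coords in Sz as [tz [Htz [Z1 Z2]]].
  assert (Htpq : tq - tp <> 0).
  { intro E. apply Hpq. assert (tq = tp) by lra. subst tq. f_equal; apply eq_IZR; lra. }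
  set (u := (tz - tp) / (tq - tp)).
  set (n := Int_part u).
  destruct (base_Int_part u) as [B1 B2]. fold n in B1, B2.
  set (f := u - IZR n).
  assert (Hf : 0 <= f < 1) by (unfold f; lra).
  set (w := (z1 - n * (q1 - p1), z2 - n * (q2 - p2))%Z).
  assert (Hu : u * (tq - tp) = tz - tp) by (unfold u; field; auto).
  assert (W1 : IZR (fst w) = IZR p1 + f * (IZR q1 - IZR p1)).
  { unfold w, f; simpl. rewrite minus_IZR, mult_IZR, minus_IZR, Z1, P1, Q1.
    apply affine_param_shift; auto. }
  assert (W2 : IZR (snd w) = IZR p2 + f * (IZR q2 - IZR p2)).
  { unfold w, f; simpl. rewrite minus_IZR, mult_IZR, minus_IZR, Z2, P2, Q2.
    apply affine_param_shift; auto. }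
  destruct (Req_dec f 0) as [F0|F0].
  - exists n. rewrite F0 in W1, W2. unfold w in W1, W2; simpl in W1, W2.
    rewrite !minus_IZR, !mult_IZR, !minus_IZR in W1, W2.
    f_equal; apply eq_IZR; rewrite plus_IZR, mult_IZR, minus_IZR; lra.
  - exfalso.
    assert (Hqp : IZR q1 - IZR p1 <> 0 \/ IZR q2 - IZR p2 <> 0).
    { destruct (Req_dec (IZR q1 - IZR p1) 0); [|auto].
      destruct (Req_dec (IZR q2 - IZR p2) 0); [|auto].
      exfalso. apply Hpq. f_equal; apply eq_IZR; lra. }
    apply (Hno w).
    + destruct w as [w1 w2]. simpl in W1, W2. unfold ptZ; simpl.
      apply segment_coords. exists (tp + f * (tq - tp)). split; [nra|].
      split; [rewrite W1, P1, Q1 | rewrite W2, P2, Q2]; ring.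
    + intro E. rewrite E in W1, W2. simpl in W1, W2. destruct Hqp as [H|H]; apply H; nra.
    + intro E. rewrite E in W1, W2. simpl in W1, W2. destruct Hqp as [H|H]; apply H; nra.
    + exists f. split; [lra|].
      destruct w as [w1 w2]. simpl in W1, W2. unfold padd, pscal, psub; simpl.
      rewrite W1, W2; auto.
Qed.

Definition lattice_pt (a e : Z * Z) (k : nat) : Z * Z :=
  (fst a + Z.of_nat k * fst e, snd a + Z.of_nat k * snd e)%Z.

Lemma ptZ_lattice_pt (a e : Z * Z) (k : nat) :
  ptZ (lattice_pt a e k) = line_pt (ptZ a) (ptZ e) (INR k).
Proof.
  unfold lattice_pt, ptZ, line_pt, padd, pscal; simpl.
  f_equal; rewrite plus_IZR, mult_IZR, <- INR_IZR_INZ; auto.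
Qed.

Lemma line_pt_inj (A E : pt) (s t : R) : E <> (0, 0) -> line_pt A E s = line_pt A E t -> s = t.
Proof.
  destruct A as [A1 A2], E as [E1 E2]; unfold line_pt, padd, pscal; simpl.
  intros HE H. apply pair_equal_spec in H as [H1 H2].
  destruct (Req_dec E1 0) as [Z1|Z1].
  - destruct (Req_dec E2 0) as [Z2|Z2]; [subst; tauto|].
    apply (Rmult_eq_reg_r E2); auto; lra.
  - apply (Rmult_eq_reg_r E1); auto; lra.
Qed.

Lemma segment_line_pt (A E : pt) (T t : R) :
  segment A (line_pt A E T) (line_pt A E t) <->
  exists u, 0 <= u <= 1 /\ line_pt A E t = line_pt A E (u * T).
Proof.
  unfold segment. split; intros [u [Hu E1]]; exists u; split; auto; rewrite E1;
    destruct A, E; unfold line_pt, padd, pscal, psub; simpl; f_equal; ring.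
Qed.

Lemma segment_lattice_index (a e z : Z * Z) (K : nat) (m : Z) : ptZ e <> (0, 0) ->
  z = (fst a + m * fst e, snd a + m * snd e)%Z ->
  segment (ptZ a) (ptZ (lattice_pt a e K)) (ptZ z) ->
  exists k, (k <= K)%nat /\ z = lattice_pt a e k.
Proof.
  intros He Ez Sz.
  assert (Hz : ptZ z = line_pt (ptZ a) (ptZ e) (IZR m)).
  { rewrite Ez. destruct a, e; unfold ptZ, line_pt, padd, pscal; simpl;
      f_equal; rewrite plus_IZR, mult_IZR; ring. }
  rewrite ptZ_lattice_pt, Hz in Sz.
  apply segment_line_pt in Sz as [t [Ht Et]]. apply line_pt_inj in Et; auto.
  assert (HKp : 0 <= INR K) by apply pos_INR.
  assert (Hm0 : (0 <= m)%Z) by (apply le_IZR; nra).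
  assert (HmK : (m <= Z.of_nat K)%Z) by (apply le_IZR; rewrite <- INR_IZR_INZ; nra).
  exists (Z.to_nat m). split; [lia|].
  rewrite Ez. unfold lattice_pt. rewrite Z2Nat.id by lia. auto.
Qed.

Lemma signed_step_props (p q : Z * Z) (s : Z) : p <> q -> (s * s = 1)%Z ->
  let e := (s * (fst q - fst p), s * (snd q - snd p))%Z in
  ptZ e <> (0, 0) /\ nrm (ptZ e) = pdist (ptZ p) (ptZ q).
Proof.
  intros Hpq Hs e. assert (Hs1 : (s = 1 \/ s = -1)%Z) by nia. split.
  - intro E. apply Hpq. destruct p, q. unfold e, ptZ in E; simpl in E.
    apply pair_equal_spec in E as [E1 E2]. apply eq_IZR in E1, E2. f_equal; nia.
  - assert (Hes : ptZ e = pscal (- IZR s) (psub (ptZ p) (ptZ q))).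
    { unfold e, ptZ, psub, pscal; simpl. f_equal; rewrite mult_IZR, minus_IZR; ring. }
    unfold pdist. rewrite Hes, nrm_pscal, Rabs_Ropp.
    destruct Hs1 as [-> | ->]; simpl; unfold Rabs; destruct Rcase_abs; lra.
Qed.

Lemma consecutive_lattice_param (a b p q : Z * Z) :
  consecutive (ptZ a) (ptZ b) p q ->
  exists (e : Z * Z) (K : nat),
    (0 < K)%nat /\ ptZ e <> (0, 0) /\ nrm (ptZ e) = pdist (ptZ p) (ptZ q) /\ b = lattice_pt a e K /\
    forall z, segment (ptZ a) (ptZ b) (ptZ z) -> exists k, (k <= K)%nat /\ z = lattice_pt a e k.
Proof.
  intros Hc.
  assert (Hc' := Hc). destruct Hc' as [Sp [Sq [Hpq _]]].
  set (e0 := (fst q - fst p, snd q - snd p)%Z).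
  assert (Hon := fun z => consecutive_lattice_on_line a b p q z Hc).
  assert (Sa : segment (ptZ a) (ptZ b) (ptZ a)).
  { exists 0. split; [lra|]. destruct a, b; unfold ptZ, padd, pscal, psub; simpl; f_equal; ring. }
  assert (Sb : segment (ptZ a) (ptZ b) (ptZ b)).
  { exists 1. split; [lra|]. destruct a, b; unfold ptZ, padd, pscal, psub; simpl; f_equal; ring. }
  destruct (Hon a Sa) as [na Ea]. destruct (Hon b Sb) as [nb Eb].
  set (D := (nb - na)%Z).
  assert (HD : D <> 0%Z).
  { intro HD0. assert (Hab : a = b) by (rewrite Ea, Eb; unfold D in HD0; f_equal; f_equal; lia).
    apply Hpq, ptZ_inj.
    destruct Sp as [t1 [_ E1]], Sq as [t2 [_ E2]].
    rewrite E1, E2, <- Hab. destruct a; unfold ptZ, padd, pscal, psub; simpl. f_equal; ring. }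
  set (s := Z.sgn D).
  assert (Hs2 : (s * s = 1)%Z) by (unfold s; destruct D; simpl; lia).
  set (e := (s * fst e0, s * snd e0)%Z).
  set (K := Z.to_nat (Z.abs D)).
  assert (HK : Z.of_nat K = Z.abs D) by (unfold K; rewrite Z2Nat.id; lia).
  destruct (signed_step_props p q s Hpq Hs2) as [He Hde].
  assert (Hline : forall n : Z, (fst p + n * (fst q - fst p), snd p + n * (snd q - snd p))%Z
                           = (fst a + (s * (n - na)) * fst e, snd a + (s * (n - na)) * snd e)%Z).
  { intros n. rewrite Ea. unfold e, e0; simpl.
    f_equal; [replace (s * (n - na) * (s * (fst q - fst p)))%Z
                with ((s * s) * ((n - na) * (fst q - fst p)))%Z by ring
             | replace (s * (n - na) * (s * (snd q - snd p)))%Z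
                with ((s * s) * ((n - na) * (snd q - snd p)))%Z by ring];
    rewrite Hs2; ring. }
  assert (HbK : b = lattice_pt a e K).
  { unfold lattice_pt. rewrite HK, Eb, Hline. unfold s, D.
    destruct (nb - na)%Z eqn:Ed; simpl; try lia;
    f_equal; f_equal; f_equal; lia. }
  exists e, K. repeat split; auto.
  - unfold K. lia.
  - intros z Sz. destruct (Hon z Sz) as [n En]. rewrite Hline in En.
    rewrite HbK in Sz. apply (segment_lattice_index a e z K (s * (n - na))); auto.
Qed.

Lemma lattice_pt_in_segment (a e : Z * Z) (K k : nat) : (0 < K)%nat -> (k <= K)%nat ->
  segment (ptZ a) (ptZ (lattice_pt a e K)) (ptZ (lattice_pt a e k)).
Proof.
  intros HK Hk. rewrite !ptZ_lattice_pt. apply segment_line_pt.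
  assert (0 < INR K) by (apply lt_0_INR; lia).
  assert (INR k <= INR K) by (apply le_INR; lia).
  assert (0 <= INR k) by apply pos_INR.
  exists (INR k / INR K). split.
  - split; [apply Rdiv_le_0_compat; lra|].
    apply (Rmult_le_reg_r (INR K)); auto. field_simplify; lra.
  - f_equal. field. lra.
Qed.

Lemma lattice_list_perm (a b p q : Z * Z) (L : list (Z * Z)) :
  NoDup L -> (forall z, In z L <-> segment (ptZ a) (ptZ b) (ptZ z)) ->
  consecutive (ptZ a) (ptZ b) p q ->
  exists (e : Z * Z) (K : nat),
    Permutation L (map (lattice_pt a e) (seq 0 (S K))) /\ b = lattice_pt a e K /\
    nrm (ptZ e) = pdist (ptZ p) (ptZ q) /\ ptZ e <> (0, 0).
Proof.
  intros HND HL Hc.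
  destruct (consecutive_lattice_param a b p q Hc) as [e [K [HK [He [Hd [Hb Hpts]]]]]].
  exists e, K. repeat split; auto.
  apply NoDup_Permutation; auto.
  - apply FinFun.Injective_map_NoDup; [|apply seq_NoDup].
    intros k1 k2 E. apply INR_eq, (line_pt_inj (ptZ a) (ptZ e)); auto.
    rewrite <- !ptZ_lattice_pt, E. auto.
  - intros z. rewrite HL, in_map_iff. split.
    + intros Sz. destruct (Hpts z Sz) as [k [Hk ->]].
      exists k. split; auto. apply in_seq. lia.
    + intros [k [<- Hk]]. apply in_seq in Hk. rewrite Hb. apply lattice_pt_in_segment; lia.
Qed.
Lemma dilate9_line_pt (A E : pt) (K t : R) : 0 < K -> -4 * K <= t <= 5 * K ->
  dilate9 A (line_pt A E K) (line_pt A E t).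
Proof.
  intros HK Ht. exists ((t - K / 2) / K). split.
  - split; apply (Rmult_le_reg_r K); auto; field_simplify; lra.
  - destruct A, E; unfold line_pt, padd, pscal, psub; simpl; f_equal; field; lra.
Qed.

Lemma sum_list_perm (f : Z * Z -> R) (l1 l2 : list (Z * Z)) :
  Permutation l1 l2 -> sum_list f l1 = sum_list f l2.
Proof. induction 1; simpl; lra. Qed.

Lemma sum_list_map_seq (f : Z * Z -> R) (phi : nat -> Z * Z) (n : nat) :
  sum_list f (map phi (seq 0 n)) = sumN n (fun k => f (phi k)).
Proof.
  induction n; [simpl; auto|].
  rewrite seq_S, map_app. simpl sumN. rewrite <- IHn.
  generalize (map phi (seq 0 n)); intros s; induction s; simpl in *; lra.
Qed.

Lemma div_le_div_cross (a b c e : R) : 0 < b -> 0 < e -> a * e <= c * b -> a / b <= c / e.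
Proof.
  intros Hb He H. apply (Rmult_le_reg_r (b * e)); [nra|].
  replace (a / b * (b * e)) with (a * e) by (field; lra).
  replace (c / e * (b * e)) with (c * b) by (field; lra). auto.
Qed.

(* The step [j] of the second differences is chosen with [j sqrt R0 ~ K sqrt h]. *)
Definition balancing_step (K j sR sh : R) : Prop :=
  (j * sR <= K * sh /\ K * sh <= 2 * j * sR) \/ (j = 1 /\ K * sh < sR).

Lemma exists_balancing_step (K : nat) (sR sh : R) : (9 <= K)%nat -> 0 < sh <= sR ->
  exists j : nat, (1 <= j <= K)%nat /\ balancing_step (INR K) (INR j) sR sh.
Proof.
  intros HK Hs. unfold balancing_step.
  assert (HKr : 9 <= INR K) by (replace 9 with (INR 9) by (simpl; ring); apply le_INR; auto).
  set (x := INR K * sh / sR).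
  assert (Hx : x * sR = INR K * sh) by (unfold x; field; lra).
  destruct (Rlt_or_le x 1) as [Hx1|Hx1].
  - exists 1%nat. split; [lia|]. right. split; [simpl; auto | nra].
  - destruct (base_Int_part x) as [B1 B2].
    set (n := Int_part x) in *.
    assert (Hn1 : (1 <= n)%Z) by (assert (0 < n)%Z by (apply lt_IZR; lra); lia).
    exists (Z.to_nat n).
    assert (E : INR (Z.to_nat n) = IZR n) by (rewrite INR_IZR_INZ, Z2Nat.id; auto; lia).
    assert (HxK : x <= INR K) by (apply (Rmult_le_reg_r sR); [lra|]; nra).
    split.
    + split; [lia|]. apply INR_le. rewrite E. lra.
    + left. rewrite E. apply IZR_le in Hn1.
      assert (IZR n * sR <= x * sR) by (apply Rmult_le_compat_r; lra).
      assert (x * sR <= (2 * IZR n) * sR) by (apply Rmult_le_compat_r; lra). lra.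
Qed.

Lemma balancing_step_ineq (K j sR sh : R) : 9 <= K -> 0 < sh -> 0 < sR -> 1 <= j ->
  balancing_step K j sR sh ->
  sR * (2 * j / (3 * (sh * sh) * K) + 2 * (K + 1) / ((sR * sR) * j))
    <= 6 * (1 / sh + sR / ((sh * sh) * (K + 1))).
Proof.
  intros HK Hsh HsR Hj Hc.
  assert (Hsh1 : 0 < 1 / sh) by (apply Rdiv_lt_0_compat; lra).
  assert (Hsh2 : 0 <= sR / ((sh * sh) * (K + 1))) by (apply Rlt_le, Rdiv_lt_0_compat; nra).
  rewrite Rmult_plus_distr_l, Rmult_plus_distr_l.
  destruct Hc as [[C1 C2]|[-> C2]].
  - assert (A1 : sR * (2 * j / (3 * (sh * sh) * K)) <= 2 / 3 * (1 / sh)).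
    { replace (sR * (2 * j / (3 * (sh * sh) * K))) with ((2 * j * sR) / (3 * (sh * sh) * K))
        by (field; lra).
      replace (2 / 3 * (1 / sh)) with (2 / (3 * sh)) by (field; lra).
      apply div_le_div_cross; nra. }
    assert (A2 : sR * (2 * (K + 1) / ((sR * sR) * j)) <= 40 / 9 * (1 / sh)).
    { replace (sR * (2 * (K + 1) / ((sR * sR) * j))) with ((2 * (K + 1)) / (sR * j))
        by (field; lra).
      replace (40 / 9 * (1 / sh)) with (40 / (9 * sh)) by (field; lra).
      apply div_le_div_cross; nra. }
    lra.
  - assert (A1 : sR * (2 * 1 / (3 * (sh * sh) * K)) <= 6 * (sR / ((sh * sh) * (K + 1)))).
    { replace (sR * (2 * 1 / (3 * (sh * sh) * K))) with ((2 * sR) / (3 * (sh * sh) * K))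
        by (field; lra).
      replace (6 * (sR / ((sh * sh) * (K + 1)))) with ((6 * sR) / ((sh * sh) * (K + 1)))
        by (field; lra).
      apply div_le_div_cross; [nra | nra |].
      assert (0 < sR * (sh * sh)) by (apply Rmult_lt_0_compat; nra).
      replace (2 * sR * (sh * sh * (K + 1))) with ((sR * (sh * sh)) * (2 * K + 2)) by ring.
      replace (6 * sR * (3 * (sh * sh) * K)) with ((sR * (sh * sh)) * (18 * K)) by ring.
      apply Rmult_le_compat_l; lra. }
    assert (A2 : sR * (2 * (K + 1) / ((sR * sR) * 1)) <= 6 * (1 / sh)).
    { replace (sR * (2 * (K + 1) / ((sR * sR) * 1))) with ((2 * (K + 1)) / sR) by (field; lra).
      replace (6 * (1 / sh)) with (6 / sh) by (field; lra).
      apply div_le_div_cross; nra. }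
    lra.
Qed.

(* [SG] is the sum of the second differences with step [j]; each of the [K + 1]
   slices also contributes the term [2 / R0]. *)
Lemma balanced_second_difference_bound (K j R0 r h c d SG lhs : R) :
  9 <= K -> 1 <= j -> 0 < c -> 1 <= d -> 0 < r -> 0 < h -> h <= R0 ->
  balancing_step K j (sqrt R0) (sqrt h) ->
  3 * K * SG <= 2 * j * j / h ->
  lhs <= sqrt (R0 * r) * ((SG + (K + 1) * (2 / R0)) / (j * c * d)) ->
  lhs <= 6 / c * (sqrt (r / h) / d + sqrt (R0 * r) / (h * d * (K + 1))).
Proof.
  intros HK Hj Hc Hd Hr Hh HhR Hjc HSG Hl.
  assert (HR : 0 < R0) by lra.
  set (sR := sqrt R0) in *. set (sh := sqrt h) in *. set (sr := sqrt r).
  assert (HsR : 0 < sR) by (apply sqrt_lt_R0; lra).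
  assert (Hsh : 0 < sh) by (apply sqrt_lt_R0; lra).
  assert (Hsr : 0 < sr) by (apply sqrt_lt_R0; lra).
  assert (ER : R0 = sR * sR) by (unfold sR; rewrite sqrt_sqrt; lra).
  assert (Eh : h = sh * sh) by (unfold sh; rewrite sqrt_sqrt; lra).
  assert (E1 : sqrt (R0 * r) = sR * sr) by (unfold sR, sr; apply sqrt_mult; lra).
  assert (E2 : sqrt (r / h) = sr / sh) by (unfold sr, sh; apply sqrt_div_alt; lra).
  rewrite E1 in Hl. rewrite E1, E2.
  assert (Hcore := balancing_step_ineq K j sR sh HK Hsh HsR Hj Hjc).
  assert (Hq : (SG + (K + 1) * (2 / R0)) / (j * c * d) <=
               (2 * j / (3 * (sh * sh) * K) + 2 * (K + 1) / ((sR * sR) * j)) / (c * d)).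
  { rewrite <- Eh, <- ER.
    replace ((2 * j / (3 * h * K) + 2 * (K + 1) / (R0 * j)) / (c * d))
      with ((2 * j * j / (3 * K * h) + (K + 1) * (2 / R0)) / (j * c * d))
      by (field; repeat split; lra).
    assert (SG <= 2 * j * j / (3 * K * h)).
    { apply (Rmult_le_reg_l (3 * K)); [lra|].
      replace (3 * K * (2 * j * j / (3 * K * h))) with (2 * j * j / h) by (field; lra). auto. }
    unfold Rdiv. apply Rmult_le_compat_r; [|lra].
    apply Rlt_le, Rinv_0_lt_compat; repeat apply Rmult_lt_0_compat; lra. }
  eapply Rle_trans; [apply Hl|].
  apply (Rmult_le_compat_l (sR * sr)) in Hq; [|nra].
  eapply Rle_trans; [apply Hq|].
  apply (Rmult_le_compat_l (sr / (c * d))) in Hcore; [|apply Rlt_le, Rdiv_lt_0_compat; nra].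
  replace (sR * sr * ((2 * j / (3 * (sh * sh) * K) + 2 * (K + 1) / (sR * sR * j)) / (c * d)))
    with (sr / (c * d) * (sR * (2 * j / (3 * (sh * sh) * K) + 2 * (K + 1) / (sR * sR * j))))
    by (field; repeat split; lra).
  eapply Rle_trans; [apply Hcore|].
  right. rewrite Eh. field. repeat split; lra.
Qed.

Definition slice_width (O : pt -> Prop) (R0 : R) (x : pt) : R :=
  mu O (pscal (/ nrm x) x) (/ (R0 * nrm x)).

Lemma slice_width_le_sqrt (O : pt -> Prop) (K0 R0 : R) (x : pt) :
  (forall theta delta, nrm theta = 1 -> 0 < delta -> / sqrt delta * mu O theta delta <= K0) ->
  0 < nrm x -> 0 < R0 -> slice_width O R0 x <= K0 * sqrt (/ (R0 * nrm x)).
Proof.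
  intros Hmu Hx HR.
  assert (Hd : 0 < / (R0 * nrm x)) by (apply Rinv_0_lt_compat; nra).
  assert (Hs : 0 < sqrt (/ (R0 * nrm x))) by (apply sqrt_lt_R0; auto).
  assert (Hn : nrm (pscal (/ nrm x) x) = 1).
  { rewrite nrm_pscal, Rabs_right by (apply Rle_ge, Rlt_le, Rinv_0_lt_compat; auto).
    field; lra. }
  specialize (Hmu _ _ Hn Hd).
  apply (Rmult_le_compat_l (sqrt (/ (R0 * nrm x)))) in Hmu; [|lra].
  rewrite <- Rmult_assoc, Rinv_r, Rmult_1_l in Hmu by lra. unfold slice_width. lra.
Qed.

(* In the short case [h, |E| < 2 / (9 eps)] and [r >= 10], so this is a lower
   bound for [sqrt (r / h) / |E|]. *)
Definition short_floor (eps : R) : R := sqrt (10 / (2 / (9 * eps))) / (2 / (9 * eps)).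

Lemma short_floor_pos (eps : R) : 0 < eps -> 0 < short_floor eps.
Proof.
  intros He. assert (0 < 2 / (9 * eps)) by (apply Rdiv_lt_0_compat; lra).
  apply Rdiv_lt_0_compat; [apply sqrt_lt_R0, Rdiv_lt_0_compat|]; lra.
Qed.

Definition second_regime_const (M eps K0 : R) : R :=
  6 / Rmin (1 / 2) (eps / (8 * M)) + K0 * sqrt M * (1 + 2 / eps) / short_floor eps.

Lemma second_regime_const_ge0 (M eps K0 : R) : 0 < M -> 0 < eps -> 0 <= K0 ->
  0 <= second_regime_const M eps K0.
Proof.
  intros HM He HK. unfold second_regime_const.
  assert (0 < Rmin (1 / 2) (eps / (8 * M)))
    by (apply Rmin_pos; [lra | apply Rdiv_lt_0_compat; lra]).
  assert (0 < 6 / Rmin (1 / 2) (eps / (8 * M))) by (apply Rdiv_lt_0_compat; lra).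
  assert (0 < 2 / eps) by (apply Rdiv_lt_0_compat; lra).
  assert (Hw := short_floor_pos eps He).
  assert (0 <= K0 * sqrt M * (1 + 2 / eps) / short_floor eps); [|lra].
  apply Rdiv_le_0_compat; [|lra].
  apply Rmult_le_pos; [apply Rmult_le_pos; [auto | apply sqrt_pos] | lra].
Qed.

Section LatticeSegment.

Variables (O : pt -> Prop) (M eps K0 : R).
Hypothesis HM : bounded_by O M.
Hypothesis H0 : O (0, 0).
Hypothesis M_pos : 0 < M.
Hypothesis eps_pos : 0 < eps.
Hypothesis rho_star_ge_eps : forall x, eps * nrm x <= rho_star O x.
Hypothesis K0_ge0 : 0 <= K0.
Hypothesis mu_sqrt : forall theta delta, nrm theta = 1 -> 0 < delta ->
  / sqrt delta * mu O theta delta <= K0.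

(* The lattice points of [J] are [A + k E] for [k <= K]; [9 J] covers the
   parameters [t] in [[-4 K, 5 K]]. *)
Variables (r R0 h : R) (A E : pt) (K : nat).
Hypothesis r_ge : 10 <= r.
Hypothesis r_le : r <= R0.
Hypothesis h_ge : 3 <= h.
Hypothesis h_le : h <= R0.
Hypothesis K_ge : (9 <= K)%nat.
Hypothesis E_ge : 1 <= nrm E.
Hypothesis annulus_line : forall t, -4 * INR K <= t <= 5 * INR K ->
  r <= rho_star O (line_pt A E t) <= r + / h.

Let P (t : R) : R := rho_star O (line_pt A E t).
Let slice_sum : R := sumN (S K) (fun k => slice_width O R0 (line_pt A E (INR k))).

Let K_ge9 : 9 <= INR K.
Proof. replace 9 with (INR 9) by (simpl; ring). apply le_INR; auto. Qed.

Lemma nrm_line_pt_ge (k : nat) : (k <= K)%nat -> r / M <= nrm (line_pt A E (INR k)).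
Proof.
  intros Hk. assert (INR k <= INR K) by (apply le_INR; auto).
  assert (0 <= INR k) by apply pos_INR.
  assert (Ha := annulus_line (INR k) ltac:(lra)).
  assert (Hu := rho_star_le_nrm O M HM H0 (line_pt A E (INR k))).
  apply (Rmult_le_reg_l M); auto. field_simplify; lra.
Qed.

Lemma slice_sum_le_card : sqrt (R0 * r) * slice_sum <= K0 * sqrt M * INR (S K).
Proof.
  assert (HRr : 0 < sqrt (R0 * r)) by (apply sqrt_lt_R0; nra).
  replace (K0 * sqrt M * INR (S K))
    with (sqrt (R0 * r) * (INR (S K) * (K0 * sqrt (M / (R0 * r)))))
    by (rewrite sqrt_div_alt by nra; field; lra).
  apply Rmult_le_compat_l; [lra|].
  apply sumN_le_const. intros k Hk.
  assert (Hn := nrm_line_pt_ge k ltac:(lia)).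
  assert (Hnp : 0 < nrm (line_pt A E (INR k))) by (eapply Rlt_le_trans; [|apply Hn];
    apply Rdiv_lt_0_compat; lra).
  eapply Rle_trans; [apply slice_width_le_sqrt; auto; lra|].
  apply Rmult_le_compat_l; auto. apply sqrt_le_1_alt.
  apply (Rmult_le_reg_l (R0 * nrm (line_pt A E (INR k)))); [nra|].
  rewrite Rinv_r by nra.
  apply (Rmult_le_compat_l M) in Hn; [|lra].
  replace (R0 * nrm (line_pt A E (INR k)) * (M / (R0 * r)))
    with (M * nrm (line_pt A E (INR k)) / r) by (field; lra).
  apply (Rmult_le_reg_l r); [lra|]. field_simplify; [|lra].
  replace (M * (r / M)) with r in Hn by (field; lra). lra.
Qed.

Let c : R := Rmin (1 / 2) (eps / (8 * M)).

Let c_pos : 0 < c.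
Proof. apply Rmin_pos; [lra | apply Rdiv_lt_0_compat; lra]. Qed.

Lemma slice_width_le_second_difference (j k : nat) :
  (1 <= j <= K)%nat -> (k <= K)%nat -> / (h * (4 * INR K)) <= eps * nrm E / 8 ->
  slice_width O R0 (line_pt A E (INR k))
    <= (P (INR k + INR j) + P (INR k - INR j) - 2 * P (INR k) + 2 / R0) / (INR j * c * nrm E).
Proof.
  intros Hj Hk Hlong.
  set (l := line_pt A E (INR k)).
  assert (Hjr : 1 <= INR j) by (replace 1 with (INR 1) by auto; apply le_INR; lia).
  assert (Hkr : INR k <= INR K) by (apply le_INR; lia).
  assert (Hk0 := pos_INR k).
  assert (Hnp : 0 < nrm l)
    by (eapply Rlt_le_trans; [|apply nrm_line_pt_ge; auto]; apply Rdiv_lt_0_compat; lra).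
  destruct (annulus_line (INR k) ltac:(lra)) as [Hr1 _].
  assert (Hdet : c * nrm E * nrm l <= Rabs (det2 l E)).
  { apply (det2_lower_bound O M HM H0 A E (INR k) (4 * INR K) r h eps); auto; try lra.
    - apply annulus_line; lra.
    - apply annulus_line; lra. }
  assert (Hcdn : 0 < c * nrm E * nrm l) by (repeat apply Rmult_lt_0_compat; lra).
  assert (Hdet0 : det2 l E <> 0) by (intro Z0; rewrite Z0, Rabs_R0 in Hdet; lra).
  eapply Rle_trans; [apply (mu_le_second_difference O M HM H0 A E (INR k) (INR j) R0); auto; lra|].
  set (Q := P (INR k + INR j) + P (INR k - INR j) - 2 * P (INR k) + 2 / R0).
  change (Q / INR j * nrm l / Rabs (det2 l E) <= Q / (INR j * c * nrm E)).
  assert (HQ : 0 <= Q).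
  { assert (H := rho_star_line_convex O M HM H0 A E (INR k) (INR j)).
    assert (0 < 2 / R0) by (apply Rdiv_lt_0_compat; lra). unfold Q, P. lra. }
  replace (Q / INR j * nrm l / Rabs (det2 l E)) with (Q / INR j * (nrm l / Rabs (det2 l E)))
    by (field; lra).
  replace (Q / (INR j * c * nrm E)) with (Q / INR j * (1 / (c * nrm E)))
    by (field; repeat split; lra).
  apply Rmult_le_compat_l; [apply Rdiv_le_0_compat; lra|].
  apply div_le_div_cross; [lra | nra | nra].
Qed.

(* The sequence [n |-> P (n - 4 K)] is convex and stays in the annulus for
   [n <= 9 K]. *)
Lemma second_difference_sum_line (j : nat) : (1 <= j <= K)%nat ->
  3 * INR K * sumN (S K) (fun k => P (INR k + INR j) + P (INR k - INR j) - 2 * P (INR k))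
    <= 2 * INR j * INR j / h.
Proof.
  intros Hj.
  set (g := fun n : nat => P (INR n - 4 * INR K)).
  assert (Hrange : forall n, (n <= 9 * K)%nat -> r <= g n <= r + / h).
  { intros n Hn. apply annulus_line.
    assert (INR n <= 9 * INR K)
      by (replace 9 with (INR 9) by (simpl; ring); rewrite <- mult_INR; apply le_INR; auto).
    assert (Hn0 := pos_INR n). lra. }
  assert (Hconvex : forall n, (n + 2 <= 9 * K)%nat -> 2 * g (S n) <= g n + g (S (S n))).
  { intros n Hn. unfold g, P.
    assert (HC := rho_star_line_convex O M HM H0 A E (INR (S n) - 4 * INR K) 1).
    replace (INR (S n) - 4 * INR K - 1) with (INR n - 4 * INR K) in HC by (rewrite S_INR; ring).
    replace (INR (S n) - 4 * INR K + 1) with (INR (S (S n)) - 4 * INR K) in HC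
      by (rewrite !S_INR; ring).
    auto. }
  assert (Hsd := second_difference_sum_le g K r (/ h) Hrange Hconvex j Hj).
  replace (INR (3 * K)) with (3 * INR K) in Hsd by (rewrite mult_INR; simpl; ring).
  unfold Rdiv. erewrite sumN_ext; [apply Hsd|].
  intros k Hk. unfold g.
  assert (E4 : INR (4 * K + k) = 4 * INR K + INR k) by (rewrite plus_INR, mult_INR; simpl; ring).
  replace (INR (4 * K + k + j) - 4 * INR K) with (INR k + INR j) by (rewrite plus_INR, E4; ring).
  replace (INR (4 * K + k - j) - 4 * INR K) with (INR k - INR j)
    by (rewrite minus_INR, E4 by lia; ring).
  replace (INR (4 * K + k) - 4 * INR K) with (INR k) by (rewrite E4; ring).
  reflexivity.
Qed.

Lemma slice_sum_le_long : / (h * (4 * INR K)) <= eps * nrm E / 8 ->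
  sqrt (R0 * r) * slice_sum
    <= 6 / c * (sqrt (r / h) / nrm E + sqrt (R0 * r) / (h * nrm E * (INR K + 1))).
Proof.
  intros Hlong.
  assert (Hs : 0 < sqrt h <= sqrt R0) by (split; [apply sqrt_lt_R0 | apply sqrt_le_1_alt]; lra).
  destruct (exists_balancing_step K (sqrt R0) (sqrt h) K_ge Hs) as [j [Hj Hbal]].
  assert (Hjr : 1 <= INR j) by (replace 1 with (INR 1) by auto; apply le_INR; lia).
  set (SG := sumN (S K) (fun k => P (INR k + INR j) + P (INR k - INR j) - 2 * P (INR k))).
  apply (balanced_second_difference_bound (INR K) (INR j) R0 r h c (nrm E) SG); auto; try lra.
  - apply second_difference_sum_line; auto.
  - apply Rmult_le_compat_l; [apply sqrt_pos|].
    eapply Rle_trans.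
    { apply sumN_le. intros k Hk. apply (slice_width_le_second_difference j k); auto; lia. }
    right. unfold Rdiv.
    rewrite (sumN_ext _ _ (fun k => / (INR j * c * nrm E)
        * ((P (INR k + INR j) + P (INR k - INR j) - 2 * P (INR k)) + 2 * / R0))) by (intros; ring).
    rewrite sumN_scal, sumN_plus, sumN_const, S_INR. unfold SG. ring.
Qed.

(* When [h K |E|] is bounded, so are [K], [h] and [|E|]; then [sqrt (r / h) / |E|]
   is bounded below and the trivial bound [slice_sum_le_card] suffices. *)
Lemma short_segment_bounds : h * (4 * INR K) * (eps * nrm E) < 8 ->
  INR (S K) <= 1 + 2 / eps /\ short_floor eps <= sqrt (r / h) / nrm E.
Proof.
  intros Hshort. unfold short_floor. set (B := 2 / (9 * eps)).
  assert (HB : 0 < B) by (apply Rdiv_lt_0_compat; lra).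
  assert (Hh : h * eps * 36 < 8).
  { eapply Rle_lt_trans; [|apply Hshort].
    replace (h * (4 * INR K) * (eps * nrm E)) with ((h * eps) * (4 * INR K * nrm E)) by ring.
    apply Rmult_le_compat_l; nra. }
  assert (Hd : nrm E * eps * 108 < 8).
  { eapply Rle_lt_trans; [|apply Hshort].
    replace (h * (4 * INR K) * (eps * nrm E)) with ((nrm E * eps) * (4 * INR K * h)) by ring.
    apply Rmult_le_compat_l; nra. }
  assert (HK : INR K * eps * 12 < 8).
  { eapply Rle_lt_trans; [|apply Hshort].
    replace (h * (4 * INR K) * (eps * nrm E)) with ((INR K * eps) * (4 * h * nrm E)) by ring.
    apply Rmult_le_compat_l; nra. }
  assert (HhB : h < B) by (unfold B; apply Rlt_div_r; lra).
  assert (HdB : nrm E < B) by (unfold B; apply Rlt_div_r; lra).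
  split.
  - rewrite S_INR. enough (INR K < 2 / eps) by lra. apply Rlt_div_r; lra.
  - apply Rle_trans with (sqrt (r / h) / B).
    + unfold Rdiv at 1 3. apply Rmult_le_compat_r; [apply Rlt_le, Rinv_0_lt_compat; auto|].
      apply sqrt_le_1_alt. apply Rle_trans with (10 / h).
      * apply Rmult_le_compat_l; [lra|]. apply Rinv_le_contravar; lra.
      * apply Rmult_le_compat_r; [apply Rlt_le, Rinv_0_lt_compat |]; lra.
    + apply Rmult_le_compat_l; [apply sqrt_pos|]. apply Rinv_le_contravar; lra.
Qed.

Lemma slice_sum_le_second_regime :
  sqrt (R0 * r) * slice_sum
    <= second_regime_const M eps K0
       * (sqrt (r / h) / nrm E + sqrt (R0 * r) / (h * nrm E * INR (S K))).
Proof.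
  assert (HW : 0 <= sqrt (r / h) / nrm E) by (apply Rdiv_le_0_compat; [apply sqrt_pos | lra]).
  assert (HY : 0 <= sqrt (R0 * r) / (h * nrm E * INR (S K))).
  { apply Rdiv_le_0_compat; [apply sqrt_pos|].
    assert (0 < INR (S K)) by apply lt_0_INR, Nat.lt_0_succ.
    repeat apply Rmult_lt_0_compat; lra. }
  assert (Hw0 := short_floor_pos eps eps_pos).
  assert (Heps2 : 0 < 2 / eps) by (apply Rdiv_lt_0_compat; lra).
  assert (Hshort_coeff : 0 <= K0 * sqrt M * (1 + 2 / eps) / short_floor eps).
  { apply Rdiv_le_0_compat; [|lra].
    apply Rmult_le_pos; [apply Rmult_le_pos; [auto | apply sqrt_pos] | lra]. }
  assert (Hlong_coeff : 0 < 6 / c) by (apply Rdiv_lt_0_compat; lra).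
  unfold second_regime_const. fold c.
  destruct (Rle_or_lt (/ (h * (4 * INR K))) (eps * nrm E / 8)) as [Hlong|Hshort].
  - eapply Rle_trans; [apply slice_sum_le_long; auto|].
    rewrite S_INR in HY |- *. apply Rmult_le_compat_r; lra.
  - destruct short_segment_bounds as [HN Hw].
    { assert (Hpos : 0 < h * (4 * INR K)) by nra.
      apply (Rmult_lt_compat_r (h * (4 * INR K))) in Hshort; auto.
      rewrite Rinv_l in Hshort by lra. lra. }
    set (w0 := short_floor eps) in *.
    eapply Rle_trans; [apply slice_sum_le_card|].
    apply Rle_trans with (K0 * sqrt M * (1 + 2 / eps) / w0 * (sqrt (r / h) / nrm E)).
    + replace (K0 * sqrt M * (1 + 2 / eps) / w0 * (sqrt (r / h) / nrm E))
        with (K0 * sqrt M * ((1 + 2 / eps) * ((sqrt (r / h) / nrm E) / w0))) by (field; lra).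
      apply Rmult_le_compat_l; [apply Rmult_le_pos; [auto | apply sqrt_pos]|].
      apply Rle_trans with (1 + 2 / eps); auto.
      rewrite <- (Rmult_1_r (1 + 2 / eps)) at 1. apply Rmult_le_compat_l; [lra|].
      apply Rle_div_r; lra.
    + apply Rmult_le_compat; lra.
Qed.

End LatticeSegment.

Lemma exists_support_bounds (O : pt -> Prop) : is_open O -> is_bounded O -> O (0, 0) ->
  exists M eps, 0 < M /\ 0 < eps /\ bounded_by O M /\ forall x, eps * nrm x <= rho_star O x.
Proof.
  intros Hopen [M0 HM0] H0. destruct (Hopen (0, 0) H0) as [r0 [Hr0 Hball]].
  assert (HM : bounded_by O (Rmax M0 1))
    by (intros y Hy; eapply Rle_trans; [apply HM0 | apply Rmax_l]; auto).
  exists (Rmax M0 1), (r0 / 2). repeat split; auto.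
  - eapply Rlt_le_trans; [|apply Rmax_r]. lra.
  - lra.
  - intros x. apply (rho_star_ge_nrm O (Rmax M0 1)); auto.
Qed.

Lemma mu_sqrt_bound_nonneg (O : pt -> Prop) :
  (exists K, forall theta delta, nrm theta = 1 -> 0 < delta ->
     / sqrt delta * mu O theta delta <= K) ->
  exists K, 0 <= K /\
    forall theta delta, nrm theta = 1 -> 0 < delta -> / sqrt delta * mu O theta delta <= K.
Proof.
  intros [K HK]. exists (Rmax K 0). split; [apply Rmax_r|].
  intros. eapply Rle_trans; [apply HK | apply Rmax_l]; auto.
Qed.

Lemma lattice_segment_progression (O : pt -> Prop) (r R0 h : R) (a b p q : Z * Z)
  (L : list (Z * Z)) :
  NoDup L -> (forall z, In z L <-> segment (ptZ a) (ptZ b) (ptZ z)) -> (10 <= length L)%nat ->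
  (forall x, dilate9 (ptZ a) (ptZ b) x -> annulus O r h x) ->
  consecutive (ptZ a) (ptZ b) p q ->
  exists (E : pt) (K : nat),
    (9 <= K)%nat /\ length L = S K /\ nrm E = pdist (ptZ p) (ptZ q) /\ 1 <= nrm E /\
    sum_list (fun l => slice_width O R0 (ptZ l)) L
      = sumN (S K) (fun k => slice_width O R0 (line_pt (ptZ a) E (INR k))) /\
    forall t, -4 * INR K <= t <= 5 * INR K -> r <= rho_star O (line_pt (ptZ a) E t) <= r + / h.
Proof.
  intros HND HL HLen H9 Hcons.
  destruct (lattice_list_perm a b p q L HND HL Hcons) as [e [K [Hperm [Hb [Hd He]]]]].
  assert (HlenK : length L = S K)
    by (rewrite (Permutation_length Hperm), length_map, length_seq; auto).
  exists (ptZ e), K. split; [lia|]. split; [exact HlenK|]. split; [exact Hd|].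
  split; [apply nrm_ptZ_ge1; auto|]. split.
  - rewrite (sum_list_perm _ _ _ Hperm), sum_list_map_seq.
    apply sumN_ext. intros i _. rewrite ptZ_lattice_pt. reflexivity.
  - intros t Ht. apply H9. rewrite Hb, ptZ_lattice_pt.
    apply dilate9_line_pt; auto. apply lt_0_INR. lia.
Qed.

Lemma le_of_ln_le (x y : R) : 0 < x -> 0 < y -> ln x <= ln y -> x <= y.
Proof.
  intros Hx Hy H. destruct (Rle_or_lt x y) as [|Hlt]; auto.
  assert (ln y < ln x) by (apply ln_increasing; auto). lra.
Qed.

Lemma ln_sqrt (x : R) : 0 < x -> ln (sqrt x) = ln x / 2.
Proof. intros Hx. rewrite <- Rpower_sqrt, ln_Rpower by auto. field. Qed.

Lemma min_two_bounds_le (lhs c1 c2 N W Y Q : R) :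
  0 <= c1 -> 0 <= c2 -> 0 <= W -> 0 <= Y -> 0 <= Q ->
  lhs <= c1 * N -> lhs <= c2 * (W + Y) -> N <= Q \/ (W <= Q /\ Y <= Q) ->
  lhs <= (c1 + 2 * c2 + 1) * Q.
Proof.
  intros Hc1 Hc2 HW HY HQ H1 H2 [HN | [HWQ HYQ]].
  - assert (c1 * N <= c1 * Q) by (apply Rmult_le_compat_l; auto). nra.
  - assert (c2 * (W + Y) <= c2 * (2 * Q)) by (apply Rmult_le_compat_l; lra). nra.
Qed.

Section TwoRegimes.

Variables (R0 r h d N lhs c1 c2 : R).
Hypothesis r_pos : 0 < r.
Hypothesis r_le : r <= R0.
Hypothesis h_pos : 0 < h.
Hypothesis d_ge : 1 <= d.
Hypothesis N_pos : 0 < N.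
Hypothesis c1_ge0 : 0 <= c1.
Hypothesis c2_ge0 : 0 <= c2.
Hypothesis lhs_le_card : lhs <= c1 * N.

Let W : R := sqrt (r / h) / d.
Let Y : R := sqrt (R0 * r) / (h * d * N).

Hypothesis lhs_le_second : lhs <= c2 * (W + Y).

Let W_pos : 0 < W.
Proof. apply Rdiv_lt_0_compat; [apply sqrt_lt_R0, Rdiv_lt_0_compat|]; lra. Qed.

Let Y_pos : 0 < Y.
Proof. apply Rdiv_lt_0_compat; [apply sqrt_lt_R0; nra|]. repeat apply Rmult_lt_0_compat; lra. Qed.

Let ln_W : ln W = (ln r - ln h) / 2 - ln d.
Proof.
  unfold W. rewrite ln_div, ln_sqrt, ln_div
    by (try apply sqrt_lt_R0; try apply Rdiv_lt_0_compat; lra).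
  field.
Qed.

Let ln_Y : ln Y = (ln R0 + ln r) / 2 - ln h - ln d - ln N.
Proof.
  unfold Y. rewrite ln_div, ln_sqrt, !ln_mult
    by (try apply sqrt_lt_R0; repeat apply Rmult_lt_0_compat; lra).
  field.
Qed.

Let ln_ge : ln r <= ln R0 /\ 0 <= ln d.
Proof. split; [|rewrite <- ln_1]; apply ln_le; lra. Qed.

(* The first-regime bound holds without the hypothesis [N <= T]. *)
Lemma first_regime_bound :
  lhs <= (c1 + 2 * c2 + 1) * Rpower (R0 * r / (h ^ 2 * d ^ 2)) (1/4).
Proof.
  set (Q := Rpower (R0 * r / (h ^ 2 * d ^ 2)) (1/4)).
  assert (HQ : 0 < Q) by apply exp_pos.
  assert (ln_Q : ln Q = (ln R0 + ln r - 2 * ln h - 2 * ln d) / 4).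
  { unfold Q. rewrite ln_Rpower, ln_div, !ln_mult, !ln_pow
      by (repeat first [apply Rdiv_lt_0_compat | apply Rmult_lt_0_compat | apply pow_lt]; lra).
    simpl. field. }
  apply (min_two_bounds_le lhs c1 c2 N W Y Q); try lra.
  destruct (Rle_or_lt (ln N) (ln Q)).
  - left. apply le_of_ln_le; auto.
  - right. split; apply le_of_ln_le; auto; lra.
Qed.

Lemma second_regime_bound :
  Rpower R0 (3/4) * Rpower d (1/2) * Rpower h (-(1/2)) * Rpower r (-(1/4)) <= N ->
  lhs <= (c1 + 2 * c2 + 1) * Rpower (r * N / (h * d ^ 2)) (1/3).
Proof.
  set (T := Rpower R0 (3/4) * Rpower d (1/2) * Rpower h (-(1/2)) * Rpower r (-(1/4))).
  set (Z := Rpower (r * N / (h * d ^ 2)) (1/3)).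
  intros HNT.
  assert (HZ : 0 < Z) by apply exp_pos.
  assert (HT : 0 < T) by (unfold T; repeat apply Rmult_lt_0_compat; apply exp_pos).
  assert (ln_Z : ln Z = (ln r + ln N - ln h - 2 * ln d) / 3).
  { unfold Z. rewrite ln_Rpower, ln_div, !ln_mult, !ln_pow
      by (repeat first [apply Rdiv_lt_0_compat | apply Rmult_lt_0_compat | apply pow_lt]; lra).
    simpl. field. }
  assert (ln_T : ln T = 3/4 * ln R0 + 1/2 * ln d - 1/2 * ln h - 1/4 * ln r).
  { unfold T. rewrite !ln_mult, !ln_Rpower by (repeat apply Rmult_lt_0_compat; apply exp_pos).
    ring. }
  assert (ln_TN := ln_le T N HT HNT).
  apply (min_two_bounds_le lhs c1 c2 N W Y Z); try lra.
  destruct (Rle_or_lt (ln N) (ln Z)).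
  - left. apply le_of_ln_le; auto.
  - right. split; apply le_of_ln_le; auto; lra.
Qed.

End TwoRegimes.

Theorem lemma6p1 (Omega : pt -> Prop)
  (Hopen : is_open Omega) (Hconv : is_convex Omega) (Hbdd : is_bounded Omega)
  (H0 : Omega (0, 0))
  (Hmu : exists K, forall theta delta, nrm theta = 1 -> 0 < delta ->
           / sqrt delta * mu Omega theta delta <= K) :
  exists C, 0 < C /\
  forall (r R0 h : R) (a b : Z * Z) (L : list (Z * Z)) (p q : Z * Z),
    10 <= r -> r <= R0 ->
    sqrt R0 <= h -> h <= R0 ->
    NoDup L ->
    (forall z, In z L <-> segment (ptZ a) (ptZ b) (ptZ z)) ->
    (10 <= length L)%nat ->
    (forall x, dilate9 (ptZ a) (ptZ b) x -> annulus Omega r h x) ->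
    consecutive (ptZ a) (ptZ b) p q ->
    let d := pdist (ptZ p) (ptZ q) in
    let cardJ := INR (length L) in
    let T := Rpower R0 (3/4) * Rpower d (1/2) * Rpower h (-(1/2))
             * Rpower r (-(1/4)) in
    let lhs := sqrt (R0 * r) *
       sum_list (fun l => mu Omega (pscal (/ nrm (ptZ l)) (ptZ l)) (/ (R0 * nrm (ptZ l)))) L in
    (cardJ <= T -> lhs <= C * Rpower (R0 * r / (h ^ 2 * d ^ 2)) (1/4)) /\
    (T <= cardJ -> lhs <= C * Rpower (r * cardJ / (h * d ^ 2)) (1/3)).
Proof.
  destruct (exists_support_bounds Omega Hopen Hbdd H0) as [M [eps [HMpos [Heps [HM Hlow]]]]].
  destruct (mu_sqrt_bound_nonneg Omega Hmu) as [K1 [HK1 HK1mu]].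
  set (c1 := K1 * sqrt M). set (c2 := second_regime_const M eps K1).
  assert (Hc1 : 0 <= c1) by (apply Rmult_le_pos; [auto | apply sqrt_pos]).
  assert (Hc2 : 0 <= c2) by (apply second_regime_const_ge0; auto).
  exists (c1 + 2 * c2 + 1). split; [lra|].
  intros r R0 h a b L p q Hr HrR HhR1 HhR2 HND HL HLen H9 Hcons d cardJ T lhs.
  assert (Hh3 : 3 <= h).
  { enough (sqrt (3 * 3) <= sqrt R0) by (rewrite sqrt_square in *; lra). apply sqrt_le_1_alt. lra. }
  destruct (lattice_segment_progression Omega r R0 h a b p q L HND HL HLen H9 Hcons)
    as [E [K [HK9 [HlenK [HdE [Hd1 [Hsum Hann]]]]]]].
  assert (Hlhs : lhs = sqrt (R0 * r)
            * sumN (S K) (fun k => slice_width Omega R0 (line_pt (ptZ a) E (INR k))))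
    by (unfold lhs; rewrite <- Hsum; reflexivity).
  assert (HcJ : cardJ = INR (S K)) by (unfold cardJ; rewrite HlenK; auto).
  fold d in HdE. assert (1 <= d) by (rewrite <- HdE; auto).
  assert (HN : 0 < cardJ) by (rewrite HcJ; apply lt_0_INR; lia).
  assert (Hcard : lhs <= c1 * cardJ).
  { rewrite Hlhs, HcJ. apply (slice_sum_le_card Omega M K1 HM H0 HMpos HK1 HK1mu r R0 h); auto. }
  assert (Hsecond : lhs <= c2 * (sqrt (r / h) / d + sqrt (R0 * r) / (h * d * cardJ))).
  { rewrite Hlhs, HcJ, <- HdE.
    apply (slice_sum_le_second_regime Omega M eps K1 HM H0 HMpos Heps Hlow HK1 HK1mu r R0 h);
      auto. }
  split; intros HT.
  - apply (first_regime_bound R0 r h d cardJ); auto; lra.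
  - apply (second_regime_bound R0 r h d cardJ); auto; lra.
Qed.
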